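(* The winding fraction satisfies: (a) $\mathrm{wf}(\overrightarrow G)>0$ if and only if $\overrightarrow G$ has a directed cycle. (b) If there is a cyclic homomorphism $\overrightarrow G\to\overrightarrow H$ then $\mathrm{wf}(\overrightarrow G)\le\mathrm{wf}(\overrightarrow H)$. (c) If $X\subseteq S^1$ is finite and $0<r<\frac12$ then $\mathrm{wf}_{\le}(X;r)\le r$, $\mathrm{wf}_{<}(X;r)<r$, and $\mathrm{wf}_{<}(X;r)\le\mathrm{wf}_{\le}(X;r)$. (d) $\mathrm{wf}(\overrightarrow{C_n^k})=\frac kn$ for all integers $0\le k<\frac n2$.
   Context: A directed graph is a finite pair $(V,E)$, $E\subseteq V\times V$, with no loops and never both $(v,w),(w,v)\in E$; write $v\to w$. A directed cycle is a sequence $v_1,\dots,v_s$ with $v_i\to v_{i+1}$ (indices mod $s$). A cyclic graph is a directed graph with a cyclic vertex order $v_0\prec\cdots\prec v_{n-1}$ (indices mod $n$) such that $v_i\to v_j$ implies $j=i+1$ or both $v_i\to v_{j-1}$ and $v_{i+1}\to v_j$. For three elements of a cyclic order $x_0\prec\cdots\prec x_{n-1}$, $x_i\prec x_j\prec x_k$ means $i<j<k$ or $k<i<j$ or $j<k<i$; subintervals are $\emptyset$, $\{x_i,\dots,x_j\}$ ($i\le j$) and $\{x_j,\dots,x_{n-1},x_0,\dots,x_i\}$ ($i<j$). A map $f$ is cyclic monotone if its fibres are subintervals and $f(s)\prec f(s')\prec f(s'')$ implies $s\prec s'\prec s''$. A cyclic homomorphism of cyclic graphs is a cyclic monotone vertex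 map $f$ such that each edge $v\to w$ has $f(v)=f(w)$ or $f(v)\to f(w)$, and $f$ is non-constant if the source has a directed cycle. $\overrightarrow{C_n^k}$ ($0\le k<n/2$): vertices $\{0,\dots,n-1\}$, $i\to j$ iff $0<(j-i)\bmod n\le k$. $\mathrm{wf}(\overrightarrow G)=\sup\{k/n:\exists\text{ cyclic homomorphism }\overrightarrow{C_n^k}\to\overrightarrow G\}$. $S^1$ is the circle of circumference $1$ with points in $[0,1)$ and clockwise distance $\vec d(x,y)$; for finite $X\subseteq S^1$ and $0<r<\frac12$, $\overrightarrow{\mathbf{VR}}_{\le}(X;r)$ (resp. $\overrightarrow{\mathbf{VR}}_{<}(X;r)$) is the directed graph on $X$ with $x_1\to x_2$ iff $0<\vec d(x_1,x_2)\le r$ (resp. $<r$), cyclic with respect to the clockwise order; $\mathrm{wf}_{\le}(X;r)$ and $\mathrm{wf}_{<}(X;r)$ are their winding fractions. *)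

From HB Require Import structures.
From mathcomp Require Import all_boot all_order all_algebra.
From mathcomp Require Import boolp classical_sets reals.
Set Implicit Arguments. Unset Strict Implicit. Unset Printing Implicit Defensive.
Import Order.TTheory GRing.Theory Num.Theory.

(* A cyclic graph with n vertices is encoded on the vertex type 'I_n, the
   cyclic vertex order being v_0 < v_1 < ... < v_{n-1} (indices mod n).
   The edge relation is [adj : rel 'I_n] (adj v w  means  v -> w). *)

Definition is_digraph (n : nat) (adj : rel 'I_n) : Prop :=
  (forall v, ~~ adj v v) /\ (forall v w, adj v w -> ~~ adj w v).

Definition is_cyclic_graph (n : nat) (adj : rel 'I_n) : Prop :=
  is_digraph adj /\
  forall i j : 'I_n, adj i j ->
    j = ordS i \/ (adj i (ord_pred j) /\ adj (ordS i) j).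

Definition has_directed_cycle (n : nat) (adj : rel 'I_n) : Prop :=
  exists s : seq 'I_n, s != [::] /\ cycle adj s.

Definition cbetween (i j k : nat) : bool :=
  [|| (i < j < k)%N, (k < i < j)%N | (j < k < i)%N].

Definition is_subinterval (m : nat) (A : {pred 'I_m}) : Prop :=
  (forall x, x \notin A) \/
  (exists i j : nat, (i <= j)%N /\ forall x : 'I_m, (x \in A) = (i <= x <= j)%N) \/
  (exists i j : nat, (i < j)%N /\
     (forall x : 'I_m, (x \in A) = ((j <= x)%N && (x < m)%N) || (x <= i)%N)).

Definition cyclic_monotone (m n : nat) (f : 'I_m -> 'I_n) : Prop :=
  (forall y : 'I_n, is_subinterval [pred x | f x == y]) /\
  (forall s s' s'' : 'I_m, cbetween (f s) (f s') (f s'') -> cbetween s s' s'').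

Definition cyclic_hom (m n : nat) (adjG : rel 'I_m) (adjH : rel 'I_n)
    (f : 'I_m -> 'I_n) : Prop :=
  cyclic_monotone f /\
  (forall v w, adjG v w -> f v = f w \/ adjH (f v) (f w)) /\
  (has_directed_cycle adjG -> exists v w, f v <> f w).

Definition Cnk (n k : nat) : rel 'I_n :=
  fun i j => (0 < (j + n - i) %% n <= k)%N.
Arguments Cnk : clear implicits.

Local Open Scope ring_scope.
Arguments cyclic_hom {m n} adjG adjH f.

Definition wf (R : realType) (n : nat) (adj : rel 'I_n) : R :=
  sup [set x : R | exists (m k : nat) (f : 'I_m -> 'I_n),
         (k.*2 < m)%N /\ cyclic_hom (Cnk m k) adj f /\ x = k%:R / m%:R].
Arguments wf R {n} adj.

(* S^1 = [0,1); clockwise distance from x to y *)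
Definition cwdist (R : realType) (x y : R) : R :=
  if 0 <= y - x then y - x else y - x + 1.

(* a finite X in S^1 is given by a duplicate-free sequence of points of [0,1);
   its vertices are listed in increasing (= clockwise) order *)
Definition on_circle (R : realType) (X : seq R) : Prop :=
  uniq X /\ all (fun x => (0 <= x) && (x < 1)) X.

Definition cpt (R : realType) (X : seq R) (i : nat) : R :=
  nth 0 (sort <=%R X) i.

Definition VR_le (R : realType) (X : seq R) (r : R) : rel 'I_(size X) :=
  fun i j => (0 < cwdist (cpt X i) (cpt X j)) && (cwdist (cpt X i) (cpt X j) <= r).

Definition VR_lt (R : realType) (X : seq R) (r : R) : rel 'I_(size X) :=
  fun i j => (0 < cwdist (cpt X i) (cpt X j)) && (cwdist (cpt X i) (cpt X j) < r).

Arguments VR_le {R} X r.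
Arguments VR_lt {R} X r.

Definition wf_le (R : realType) (X : seq R) (r : R) : R := wf R (VR_le X r).
Definition wf_lt (R : realType) (X : seq R) (r : R) : R := wf R (VR_lt X r).
Arguments wf_le {R} X r.
Arguments wf_lt {R} X r.

(* A cyclic homomorphism from C_m^k sends the standard m-cycle of C_m^k to a
   closed walk winding N >= 1 times around the target.  If the target's vertices
   sit on the circle with every edge of clockwise length in (0, rho], rho < 1/2,
   then the m windows of k consecutive steps each have clockwise length at most
   rho and together cover the walk k times, so k N <= m rho and k/m <= rho.
   Placing VR(X; r) at X (for the strict version, with rho the largest clockwise
   distance below r) and C_n^k at the points i/n gives (c) and (d).
   Conversely the vertex set of a directed cycle in a cyclic graph, read in
   cyclic order, is the image of a homomorphism from C_t^1 with t >= 3, since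
   everything cyclically between the ends of an edge is adjacent to both ends;
   this gives (a).  For (b), subintervals are exactly the sets that do not
   interleave with their complement, so cyclic monotone maps compose, and a
   composite of homomorphisms cannot become constant: the image walk meets every
   arc of the middle graph. *)

From HB Require Import structures.
From mathcomp Require Import all_boot all_order all_algebra.
From mathcomp Require Import boolp classical_sets reals.
From mathcomp Require Import zify ring lra.
Import Order.TTheory GRing.Theory Num.Theory.
Set Implicit Arguments. Unset Strict Implicit. Unset Printing Implicit Defensive.

Lemma modn_lt_double (y n : nat) : y < n + n ->
  (y < n /\ y %% n = y) \/ (n <= y /\ y %% n = y - n).
Proof.
move=> y_lt; case: (ltnP y n) => hy; [left; split=> //; exact: modn_small|right; split=> //].
by rewrite -{1}(subnK hy) modnDr modn_small //; lia.
Qed.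

(* Replaces every innermost [y %% n] with [y < 2 n] by a fresh variable and the
   two cases of [modn_lt_double], so that [lia] can finish. *)
Ltac elim_small_mod :=
  repeat match goal with H : context [_ %% _] |- _ => revert H end;
  repeat match goal with
  | |- context [ ?y %% ?n ] =>
      lazymatch y with context [_ %% _] => fail | _ => idtac end;
      let H := fresh in have H := @modn_lt_double y n ltac:(lia); move: H;
      generalize (y %% n); intros ? ?
  end; intros.

Ltac ord_lia :=
  repeat match goal with H : ?P |- _ => lazymatch type of P with Prop => revert H end end;
  repeat match goal with x : 'I_ _ |- _ =>
    have := ltn_ord x; move: (nat_of_ord x) => ?; clear x; intro end;
  intros; elim_small_mod; lia.

Section CyclicDistance.
Variable n : nat.
Implicit Types a b c : 'I_n.

Definition cdist a b : nat := (b + n - a) %% n.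

Lemma CnkE k a b : Cnk n k a b = (0 < cdist a b <= k).
Proof. by []. Qed.

Lemma cdist_lt a b : cdist a b < n.
Proof. by rewrite ltn_mod; case: n a => [[]|]. Qed.

Lemma cdist_eq0 a b : (cdist a b == 0) = (a == b).
Proof. by rewrite /cdist -(inj_eq val_inj) /=; apply/eqP/eqP; ord_lia. Qed.

Lemma cdist_inj a : injective (cdist a).
Proof. by move=> b c; rewrite /cdist => h; apply: val_inj => /=; move: h; ord_lia. Qed.

Lemma cdist_ord_pred a b : a != b -> cdist a (ord_pred b) = (cdist a b).-1.
Proof. by rewrite /cdist -(inj_eq val_inj) /=; ord_lia. Qed.

Lemma cdist_ordSl a b : a != b -> cdist (ordS a) b = (cdist a b).-1.
Proof. by rewrite /cdist -(inj_eq val_inj) /=; ord_lia. Qed.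

Lemma cdist_ordS a : cdist a (ordS a) = 1 %% n.
Proof. by rewrite /cdist /=; ord_lia. Qed.

Lemma cdistK a b : (a + cdist a b) %% n = b.
Proof. by rewrite /cdist; ord_lia. Qed.

Lemma cdist_addmod a b e : e < n -> (a + e) %% n = b -> cdist a b = e.
Proof. by rewrite /cdist; ord_lia. Qed.

Lemma cdist_sym a b : a != b -> cdist a b + cdist b a = n.
Proof. by rewrite /cdist -(inj_eq val_inj) /=; ord_lia. Qed.

Lemma cdist_le a b c :
  (a < c <= b) || ((b < a) && ((a < c) || (c <= b))) -> cdist a c <= cdist a b.
Proof. by rewrite /cdist; ord_lia. Qed.

End CyclicDistance.

Lemma ordS_neq t (i : 'I_t) : 1 < t -> ordS i != i.
Proof. by rewrite -(inj_eq val_inj) /=; ord_lia. Qed.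

Section CyclicGraph.
Variables (n : nat) (adj : rel 'I_n).
Hypothesis adj_cyclic : is_cyclic_graph adj.

Lemma cyclic_graph_between u w z :
  adj u w -> 0 < cdist u z < cdist u w -> adj u z /\ adj z w.
Proof.
have [[adj_irr _] adj_fill] := adj_cyclic.
move=> uw; have [d] := ubnP (cdist u w).
elim: d => [//|d IH] in u w z uw *; move=> uw_lt uz_lt.
have u_neq_w : u != w by apply: contraTneq uw => ->; apply: adj_irr.
have u_neq_z : u != z by rewrite -cdist_eq0; lia.
case: (adj_fill u w uw) => [w_succ | [u_predw succu_w]].
  by move: uz_lt; rewrite w_succ cdist_ordS; have := leq_mod 1 n; lia.
split.
  have [z_last|z_not_last] := eqVneq (cdist u z) (cdist u w).-1.
    by have -> : z = ord_pred w by apply: (@cdist_inj _ u); rewrite cdist_ord_pred.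
  by case: (IH u (ord_pred w) z u_predw); rewrite ?cdist_ord_pred //; lia.
have [z_first|z_not_first] := eqVneq (cdist u z) 1.
  suff -> : z = ordS u by [].
  apply: (@cdist_inj _ u); rewrite cdist_ordS z_first modn_small //.
  by have := cdist_lt u w; lia.
by case: (IH (ordS u) w z succu_w); rewrite ?cdist_ordSl //; lia.
Qed.

Lemma cyclic_graph_first_after u w z :
  adj u w -> 0 < cdist u z <= cdist u w -> adj u z.
Proof.
move=> uw /andP[z_gt0]; rewrite leq_eqVlt => /orP[/eqP/cdist_inj -> //|z_lt].
by case: (cyclic_graph_between uw (z:=z)); rewrite ?z_gt0.
Qed.

End CyclicGraph.

Section StandardCycle.
Variables (m : nat) (m_gt0 : 0 < m).

Definition ord_mod (i : nat) : 'I_m := Ordinal (ltn_pmod i m_gt0).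

Lemma ord_mod_ord (v : 'I_m) : ord_mod v = v.
Proof. by apply: val_inj; rewrite /= modn_small. Qed.

Lemma ord_modDr i : ord_mod (i + m) = ord_mod i.
Proof. by apply: val_inj; rewrite /= modnDr. Qed.

Lemma ord_mod_period : ord_mod m = ord_mod 0.
Proof. by rewrite -[in LHS](add0n m) ord_modDr. Qed.

Lemma Cnk_ord_mod k i j : 0 < j <= k -> j < m -> Cnk m k (ord_mod i) (ord_mod (i + j)).
Proof.
move=> j_range j_lt; rewrite CnkE /cdist /= -modnDml.
by have := ltn_pmod i m_gt0; move: (i %% m) => a a_lt; elim_small_mod; lia.
Qed.

Lemma ord_mod_const (T : Type) (g : 'I_m -> T) :
  (forall i, i < m -> g (ord_mod i) = g (ord_mod i.+1)) -> forall v w, g v = g w.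
Proof.
move=> g_step; suff g_cst i : i <= m -> g (ord_mod i) = g (ord_mod 0).
  by move=> v w; rewrite -(ord_mod_ord v) -(ord_mod_ord w) !g_cst // ltnW.
by elim: i => [|i IH] i_le //; rewrite -g_step -?IH //; lia.
Qed.

End StandardCycle.

Lemma path_map_iota (T : Type) (e : rel T) (g : nat -> T) N a :
  path e (g a) [seq g i | i <- iota a.+1 N] = all (fun i => e (g i) (g i.+1)) (iota a N).
Proof. by elim: N a => [|N IH] a //=; rewrite IH. Qed.

Lemma last_map_iota (T : Type) (g : nat -> T) N a :
  last (g a) [seq g i | i <- iota a.+1 N] = g (a + N).
Proof. by elim: N a => [|N IH] a /=; rewrite ?addn0 // IH addSnnS. Qed.

Lemma cycle_map_iota (T : Type) (e : rel T) (g : nat -> T) N : 0 < N ->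
  g N = g 0 -> (forall i, i < N -> e (g i) (g i.+1)) ->
  cycle e [seq g i | i <- iota 0 N].
Proof.
case: N => // N _ g_per g_step /=.
have -> : rcons [seq g i | i <- iota 1 N] (g 0) = [seq g i | i <- iota 1 N.+1].
  by rewrite -[N.+1]addn1 iotaD cats1 map_rcons add1n g_per.
by rewrite path_map_iota; apply/allP => i; rewrite mem_iota => /andP[_ i_lt]; apply: g_step.
Qed.

Lemma Cnk_has_cycle m k : 0 < k -> k.*2 < m -> has_directed_cycle (Cnk m k).
Proof.
move=> k_gt0 km; have m_gt0 : 0 < m by lia.
exists [seq ord_mod m_gt0 i | i <- iota 0 m]; split; first by case: m km m_gt0.
apply: cycle_map_iota => //; first exact: ord_mod_period.
by move=> i _; rewrite -addn1; apply: Cnk_ord_mod; lia.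
Qed.

Lemma path_collapse (T : eqType) (e : rel T) x p :
  path (fun a b => (a == b) || e a b) x p ->
  exists q, [/\ path e x q, last x q = last x p & q = [::] -> all (pred1 x) p].
Proof.
elim: p x => [|y p IH] x /=; first by move=> _; exists [::].
case/andP=> /orP [/eqP <-|xy] yp; have [q [q_path q_last q_nil]] := IH _ yp.
  by exists q; split => // /q_nil ->; rewrite eqxx.
by exists (y :: q); split => //=; rewrite xy.
Qed.

Section HomFromCnk.
Variables (m k n : nat) (adj : rel 'I_n) (f : 'I_m -> 'I_n).
Hypotheses (m_gt0 : 0 < m) (k_gt0 : 0 < k) (km : k.*2 < m).
Hypothesis f_hom : cyclic_hom (Cnk m k) adj f.

Lemma Cnk_hom_step i : let w j := f (ord_mod m_gt0 j) in w i = w i.+1 \/ adj (w i) (w i.+1).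
Proof.
have [_ [f_edge _]] := f_hom; rewrite -addn1.
by apply: f_edge; apply: Cnk_ord_mod; lia.
Qed.

Lemma Cnk_hom_nonconst_step :
  exists2 i, i < m & f (ord_mod m_gt0 i) != f (ord_mod m_gt0 i.+1).
Proof.
have [_ [_ f_nonconst]] := f_hom; have [v [w fvw]] := f_nonconst (Cnk_has_cycle k_gt0 km).
apply: contrapT => no_step; apply: fvw; apply: (@ord_mod_const _ m_gt0) => i i_lt.
by apply/eqP; apply/negPn/negP => step; apply: no_step; exists i.
Qed.

Lemma cyclic_hom_Cnk_cycle : has_directed_cycle adj.
Proof.
pose g i := f (ord_mod m_gt0 i).
have g_path : path (fun a b => (a == b) || adj a b) (g 0) [seq g i | i <- iota 1 m].
  rewrite (path_map_iota _ g m 0); apply/allP => i _.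
  by rewrite /g; case: (Cnk_hom_step i) => [->|->]; rewrite ?eqxx ?orbT.
have [q [q_path q_last q_nil]] := path_collapse g_path.
have g_last : last (g 0) [seq g i | i <- iota 1 m] = g 0.
  by rewrite (last_map_iota g m 0) /g ord_mod_period.
case/lastP: q q_path q_last q_nil => [|q y] q_path q_last q_nil.
  have /allP g_cst := q_nil erefl.
  have g_eq j : 0 < j <= m -> g j = g 0.
    by move=> j_range; apply/eqP/g_cst/map_f; rewrite mem_iota; lia.
  have [i i_lt] := Cnk_hom_nonconst_step; rewrite -/(g i) -/(g i.+1) => /eqP[].
  rewrite [g i.+1]g_eq; last lia.
  by case: (posnP i) => [->|i_gt0] //; rewrite g_eq //; lia.
exists (g 0 :: q); split => //.
by rewrite /= -[in rcons _ (g 0)]g_last -q_last last_rcons.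
Qed.

End HomFromCnk.

Section IncreasingMaps.
Variables (t n : nat) (f : 'I_t -> 'I_n).
Hypothesis f_mono : {mono f : a b / a < b}.

Lemma increasing_inj : injective f.
Proof.
move=> a b fab; apply: val_inj; apply/eqP.
by rewrite eqn_leq leqNgt -f_mono fab ltnn leqNgt -f_mono fab ltnn.
Qed.

Lemma increasing_leq : {mono f : a b / a <= b}.
Proof. by move=> a b; rewrite leqNgt f_mono -leqNgt. Qed.

Lemma increasing_cyclic_monotone : cyclic_monotone f.
Proof.
split=> [y|a b c]; last by rewrite /cbetween !f_mono.
have [[a /eqP fa]|no_a] := pselect (exists a, f a == y); last first.
  by left=> x; rewrite inE; apply/negP => fx; apply: no_a; exists x.
right; left; exists a, a; split=> // x.
by rewrite inE -fa (inj_eq increasing_inj) -(inj_eq val_inj) eqn_leq andbC.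
Qed.

Lemma cdist_increasing_ordS i j : j != i -> cdist (f i) (f (ordS i)) <= cdist (f i) (f j).
Proof.
rewrite -(inj_eq val_inj) /= => /eqP j_neq_i; apply: cdist_le.
rewrite !f_mono !increasing_leq; have := ltn_ord j; have := ltn_ord i.
have [i_last|i_lt] := eqVneq i.+1 t.
  have -> : ordS i = 0 :> nat by rewrite /= i_last modnn.
  lia.
have -> : ordS i = i.+1 :> nat by rewrite /= modn_small //; have := ltn_ord i; lia.
lia.
Qed.

Lemma increasing_cyclic_hom_Cn1 (adj : rel 'I_n) : 2 < t ->
  (forall i, adj (f i) (f (ordS i))) -> cyclic_hom (Cnk t 1) adj f.
Proof.
move=> t_gt2 f_edge; split; first exact: increasing_cyclic_monotone.
split=> [v w|_].
  rewrite CnkE => vw1; right; suff -> : w = ordS v by [].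
  by apply: (@cdist_inj _ v); rewrite cdist_ordS modn_small; lia.
exists (Ordinal (ltnW (ltnW t_gt2))), (Ordinal (ltnW t_gt2)).
by move/increasing_inj/(congr1 val).
Qed.

End IncreasingMaps.

Lemma cycle_undup_size_gt2 n (adj : rel 'I_n) (s : seq 'I_n) :
  is_digraph adj -> s != [::] -> cycle adj s -> 2 < size (undup s).
Proof.
move=> [adj_irr adj_asym]; case: s => // x0 s' _ s_cycle; set s := x0 :: s'.
have next_in u : u \in s -> next s u \in s by rewrite mem_next.
have next_adj u : u \in s -> adj u (next s u) by apply: next_cycle.
have next_neq u : u \in s -> next s u != u.
  by move=> u_in; apply: contraTneq (next_adj u u_in) => ->; apply: adj_irr.
set y := next s x0; set z := next s y.
have x_in : x0 \in s := mem_head x0 s'; have y_in : y \in s := next_in x0 x_in.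
have z_neq_x : z != x0.
  apply/eqP => z_x; have := adj_asym _ _ (next_adj x0 x_in).
  by rewrite -/y -z_x next_adj.
apply: (@leq_trans (size [:: x0; y; z])) => //; apply: uniq_leq_size.
  have y_neq_x : y != x0 := next_neq x0 x_in; have z_neq_y : z != y := next_neq y y_in.
  by rewrite /= !inE !negb_or ![x0 == _]eq_sym [y == z]eq_sym y_neq_x z_neq_x z_neq_y.
by move=> u; rewrite !inE mem_undup => /or3P[] /eqP ->; rewrite ?next_in.
Qed.

Lemma cyclic_graph_Cn1_hom n (adj : rel 'I_n) : is_cyclic_graph adj ->
  has_directed_cycle adj -> exists t (f : 'I_t -> 'I_n), 2 < t /\ cyclic_hom (Cnk t 1) adj f.
Proof.
move=> adj_cyc [[|x0 s'] [s_nil s_cycle]] //; set s := x0 :: s' in s_nil s_cycle *.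
have [[adj_irr _] _] := adj_cyc.
pose c := sort <=%O (undup s).
have c_lt : sorted <%O c by rewrite sort_lt_sorted undup_uniq.
have c_mem u : (u \in c) = (u \in s) by rewrite mem_sort mem_undup.
have c_size : 2 < size c by rewrite size_sort; apply: cycle_undup_size_gt2 adj_cyc.1 s_nil s_cycle.
pose f (i : 'I_(size c)) := nth x0 c i.
have f_mono : {mono f : a b / a < b}.
  by move=> a b; apply: (lt_sorted_ltn_nth x0 c_lt); rewrite inE.
exists (size c), f; split=> //; apply: increasing_cyclic_hom_Cn1 => // i.
have x_in : f i \in s by rewrite -c_mem mem_nth.
have xy := next_cycle s_cycle x_in; set y := next s (f i) in xy.
have [j fj] : exists j : 'I_(size c), f j = y.
  have y_idx : index y c < size c by rewrite index_mem c_mem mem_next.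
  by exists (Ordinal y_idx); rewrite /f nth_index // -index_mem.
apply: (cyclic_graph_first_after adj_cyc xy); apply/andP; split.
  by rewrite lt0n cdist_eq0 (inj_eq (increasing_inj f_mono)) eq_sym ordS_neq // ltnW.
rewrite -fj; apply: cdist_increasing_ordS => //.
by apply: contraTneq xy => ji; rewrite -fj ji adj_irr.
Qed.

Definition unlinked m (A : {pred 'I_m}) : Prop := forall a a' b b' : 'I_m,
  a \in A -> a' \in A -> b \notin A -> b' \notin A ->
  cbetween a b a' -> cbetween a' b' a -> False.

Lemma cbetween_swap a b a' b' :
  cbetween a b a' -> cbetween a' b' a -> cbetween b a' b' && cbetween b' a b.
Proof. rewrite /cbetween; lia. Qed.

Lemma ex_minn_ord m (A : {pred 'I_m}) :
  (exists x, x \in A) -> exists2 i, i \in A & forall x, x \in A -> i <= x.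
Proof.
case=> x0 x0_in; case: (arg_minnP (P := fun x => x \in A) (fun x : 'I_m => nat_of_ord x) x0_in).
by move=> i; exists i.
Qed.

Lemma ex_maxn_ord m (A : {pred 'I_m}) :
  (exists x, x \in A) -> exists2 i, i \in A & forall x, x \in A -> x <= i.
Proof.
case=> x0 x0_in; case: (arg_maxnP (P := fun x => x \in A) (fun x : 'I_m => nat_of_ord x) x0_in).
by move=> i; exists i.
Qed.

Section Unlinked.
Variables (m : nat) (A : {pred 'I_m}).

Lemma subinterval_unlinked : is_subinterval A -> unlinked A.
Proof.
move=> A_int a a' b b'; case: A_int => [A0|[[i [j [_ A_ij]]]|[i [j [_ A_ij]]]]].
- by rewrite (negbTE (A0 a)).
- by rewrite !A_ij /cbetween; lia.
- rewrite !A_ij /cbetween; have := ltn_ord a; have := ltn_ord a'.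
  by have := ltn_ord b; have := ltn_ord b'; lia.
Qed.

Hypothesis A_unlinked : unlinked A.

Lemma unlinked_compl : unlinked [predC A].
Proof.
move=> b b' a a'; rewrite !inE !negbK => b_out b'_out a_in a'_in bab /(cbetween_swap bab).
by case/andP; apply: A_unlinked.
Qed.

Lemma mem_notin_neq (x y : 'I_m) : x \in A -> y \notin A -> (x : nat) <> y.
Proof. by move=> x_in y_out /val_inj xy; rewrite -xy x_in in y_out. Qed.

Lemma unlinked_hull i j a : i \in A -> j \in A -> a \notin A -> ~~ (i <= a <= j) ->
  forall x : 'I_m, i <= x <= j -> x \in A.
Proof.
move=> i_in j_in a_out a_hull x x_hull; apply: contrapT => /negP x_out.
have := mem_notin_neq i_in x_out; have := mem_notin_neq j_in x_out.
have := mem_notin_neq i_in a_out; have := mem_notin_neq j_in a_out => ? ? ? ?.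
by apply: (A_unlinked i_in j_in x_out a_out); rewrite /cbetween; lia.
Qed.

End Unlinked.

Lemma unlinked_subinterval m (A : {pred 'I_m}) : unlinked A -> is_subinterval A.
Proof.
move=> A_unl; have [A_ne|A0] := pselect (exists x, x \in A); last first.
  by left=> x; apply/negP => x_in; apply: A0; exists x.
have [i i_in i_min] := ex_minn_ord A_ne; have [j j_in j_max] := ex_maxn_ord A_ne.
have [[b /andP[b_out b_hull]]|no_gap] := pselect (exists b, (b \notin A) && (i <= b <= j)).
  have C_ne : exists x, x \in [predC A] by exists b.
  have [p p_out p_min] := ex_minn_ord C_ne; have [q q_out q_max] := ex_maxn_ord C_ne.
  have C_inside x : x \notin A -> i < x < j.
    move=> x_out; have := mem_notin_neq i_in x_out; have := mem_notin_neq j_in x_out.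
    suff : i <= x <= j by lia.
    apply: contraT => x_hull.
    by have := unlinked_hull A_unl i_in j_in x_out x_hull b_hull; rewrite (negbTE b_out).
  have pq_out (x : 'I_m) : p <= x <= q -> x \notin A.
    have i_nhull : ~~ (p <= i <= q) by have := C_inside p p_out; lia.
    have i_in' : i \notin [predC A] by rewrite inE negbK.
    by move=> x_pq; have := unlinked_hull (unlinked_compl A_unl) p_out q_out i_in' i_nhull x_pq.
  right; right; exists p.-1, q.+1; split.
    by have := C_inside p p_out; have := q_max p p_out; lia.
  move=> x; apply/idP/idP => [x_in|x_wrap].
    have := C_inside p p_out; have := ltn_ord x.
    by case: (boolP (p <= x <= q)) => [/pq_out|]; rewrite ?x_in //; lia.
  apply: contraT => x_out; have := p_min x x_out; have := q_max x x_out.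
  by have := C_inside p p_out; move: x_wrap; lia.
right; left; exists i, j; split; first exact: i_min.
move=> x; apply/idP/idP => [x_in|x_hull]; first by rewrite i_min ?j_max.
by apply: contrapT => /negP x_out; apply: no_gap; exists x; rewrite x_out.
Qed.

Lemma cbetween_asym a b c : cbetween a b c -> cbetween c b a -> False.
Proof. rewrite /cbetween; lia. Qed.

Lemma cbetween_total a b c : a <> b -> b <> c -> a <> c -> cbetween a b c || cbetween c b a.
Proof. rewrite /cbetween; lia. Qed.

Lemma cyclic_monotone_homo m n (f : 'I_m -> 'I_n) a b c :
  cyclic_monotone f -> f a != f b -> f b != f c -> f a != f c ->
  cbetween a b c -> cbetween (f a) (f b) (f c).
Proof.
move=> [_ f_refl] /eqP ab /eqP bc /eqP ac abc.
have val_neq (x y : 'I_n) : x <> y -> (x : nat) <> y by move=> xy /val_inj.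
have /orP[//|/f_refl cba] := cbetween_total (val_neq _ _ ab) (val_neq _ _ bc) (val_neq _ _ ac).
by case: (cbetween_asym abc cba).
Qed.

Lemma cyclic_monotone_comp m n p (f : 'I_m -> 'I_n) (g : 'I_n -> 'I_p) :
  cyclic_monotone f -> cyclic_monotone g -> cyclic_monotone (g \o f).
Proof.
move=> f_mono g_mono; have [f_fib f_refl] := f_mono; have [g_fib g_refl] := g_mono.
split=> [z|a b c /g_refl /f_refl //]; apply: unlinked_subinterval.
move=> a a' b b'; rewrite !inE /= => ga ga' gb gb' aba' ab'a.
have f_neq x y : g x == z -> g y != z -> x != y.
  by move=> gx; apply: contraNneq => <-.
have [faa'|faa'] := eqVneq (f a) (f a').
  apply: (subinterval_unlinked (f_fib (f a)) _ _ _ _ aba' ab'a); rewrite !inE ?faa' //.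
    by rewrite eq_sym (f_neq _ _ ga' gb).
  by rewrite eq_sym (f_neq _ _ ga' gb').
apply: (subinterval_unlinked (g_fib z) (a := f a) (a' := f a') (b := f b) (b' := f b'));
  rewrite ?inE //.
  apply: cyclic_monotone_homo => //; first exact: f_neq ga gb.
  by rewrite eq_sym (f_neq _ _ ga' gb).
apply: cyclic_monotone_homo => //; first exact: f_neq ga' gb'.
  by rewrite eq_sym (f_neq _ _ ga gb').
by rewrite eq_sym.
Qed.

Section Walks.
Variables (n : nat) (w : nat -> 'I_n).

Definition walk_length j := \sum_(i < j) cdist (w i) (w i.+1).

Lemma walk_lengthS j : walk_length j.+1 = walk_length j + cdist (w j) (w j.+1).
Proof. by rewrite /walk_length big_ord_recr. Qed.

Lemma walk_length_mod j : (w 0 + walk_length j) %% n = w j.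
Proof.
elim: j => [|j IH]; first by rewrite /walk_length big_ord0 addn0 modn_small.
by rewrite walk_lengthS addnA -modnDml IH cdistK.
Qed.

Lemma walk_cdist j : cdist (w 0) (w j) = walk_length j %% n.
Proof.
apply: cdist_addmod; last by rewrite modnDmr walk_length_mod.
by rewrite ltn_mod; have := ltn_ord (w 0); lia.
Qed.

Lemma walk_cover (P : pred 'I_n) : P (w 0) ->
  (forall i z, P (w i) -> 0 < cdist (w i) z <= cdist (w i) (w i.+1) -> P z) ->
  forall j z, cdist (w 0) z <= walk_length j -> P z.
Proof.
move=> P0 P_step; elim=> [|j IH] z.
  by rewrite /walk_length big_ord0 leqn0 cdist_eq0 => /eqP <-.
have [z_le|z_gt] := leqP (cdist (w 0) z) (walk_length j); first by move=> _; apply: IH.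
rewrite walk_lengthS => z_le; apply: (P_step j); first by apply: IH; rewrite walk_cdist leq_mod.
have -> : cdist (w j) z = cdist (w 0) z - walk_length j.
  apply: cdist_addmod; first by have := cdist_lt (w 0) z; lia.
  by rewrite -walk_length_mod modnDml -addnA subnKC ?cdistK // ltnW.
by rewrite subn_gt0 z_gt leq_subLR.
Qed.

Lemma closed_walk_length m : w m = w 0 -> (exists2 i, i < m & w i != w i.+1) ->
  n <= walk_length m.
Proof.
move=> w_closed [i i_lt wi_neq]; apply: dvdn_leq.
  rewrite /walk_length (bigD1 (Ordinal i_lt)) //= addn_gt0 lt0n cdist_eq0 wi_neq //.
have : w 0 + walk_length m == w 0 + 0 %[mod n].
  by rewrite walk_length_mod w_closed addn0 modn_small.
by rewrite eqn_modDl mod0n.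
Qed.

End Walks.

Lemma hom_const_between n p (adjG : rel 'I_n) (adjH : rel 'I_p) (g : 'I_n -> 'I_p) :
  is_cyclic_graph adjG -> is_digraph adjH ->
  (forall v w, adjG v w -> g v = g w \/ adjH (g v) (g w)) ->
  forall u w z, adjG u w -> g u = g w -> 0 < cdist u z < cdist u w -> g z = g u.
Proof.
move=> adjG_cyc [_ adjH_asym] g_edge u w z uw guw uzw.
have [uz zw] := cyclic_graph_between adjG_cyc uw uzw.
case: (g_edge _ _ uz) => [//|gu_gz]; case: (g_edge _ _ zw) => [gz_gw|gz_gw].
  by rewrite gz_gw guw.
by have := adjH_asym _ _ gu_gz; rewrite guw gz_gw.
Qed.

Lemma cyclic_hom_comp_nonconst m n p (adjG : rel 'I_n) (adjH : rel 'I_p) k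
    (f : 'I_m -> 'I_n) (g : 'I_n -> 'I_p) :
  is_cyclic_graph adjG -> is_digraph adjH -> 0 < k -> k.*2 < m ->
  cyclic_hom (Cnk m k) adjG f -> cyclic_hom adjG adjH g ->
  exists v w, g (f v) <> g (f w).
Proof.
move=> adjG_cyc adjH_di k_gt0 km f_hom [_ [g_edge g_nonconst]].
have m_gt0 : 0 < m by lia.
have [v0 [w0 g_neq]] := g_nonconst (cyclic_hom_Cnk_cycle m_gt0 k_gt0 km f_hom).
(* If [g \o f] were constant, [hom_const_between] would spread its value along the
   image of the standard cycle, a closed walk that meets every vertex of [adjG]. *)
apply: contrapT => gf_const; apply: g_neq.
pose w i := f (ord_mod m_gt0 i); pose c := g (w 0).
have gw i : g (w i) = c by apply: contrapT => gwi; apply: gf_const; do 2!eexists; exact: gwi.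
suff g_const z : g z == c by rewrite (eqP (g_const v0)) (eqP (g_const w0)).
apply: (@walk_cover n w (fun y => g y == c) _ _ m z); first by rewrite /= gw.
  move=> i y _ /andP[y_gt0]; rewrite leq_eqVlt => /orP[/eqP/cdist_inj ->|y_lt].
    by rewrite gw.
  have wi_neq : w i != w i.+1 by rewrite -cdist_eq0 -lt0n; lia.
  have [/eqP|wi_adj] := Cnk_hom_step m_gt0 k_gt0 km f_hom i; first by rewrite (negbTE wi_neq).
  by rewrite /= (hom_const_between adjG_cyc adjH_di g_edge wi_adj) ?gw ?y_gt0.
apply: leq_trans (ltnW (cdist_lt _ _)) _; apply: closed_walk_length.
  by rewrite /w ord_mod_period.
exact: Cnk_hom_nonconst_step m_gt0 k_gt0 km f_hom.
Qed.

Lemma Cnk0_acyclic m : ~ has_directed_cycle (Cnk m 0).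
Proof.
case=> -[|x s] [// _ s_cycle].
by have := next_cycle s_cycle (mem_head x s); rewrite CnkE; case: (cdist _ _).
Qed.

Lemma cyclic_hom_Cnk_comp m n p k (adjG : rel 'I_n) (adjH : rel 'I_p)
    (h : 'I_m -> 'I_n) (f : 'I_n -> 'I_p) :
  is_cyclic_graph adjG -> is_digraph adjH -> k.*2 < m ->
  cyclic_hom (Cnk m k) adjG h -> cyclic_hom adjG adjH f -> cyclic_hom (Cnk m k) adjH (f \o h).
Proof.
move=> adjG_cyc adjH_di km h_hom f_hom.
have [h_mono [h_edge _]] := h_hom; have [f_mono [f_edge _]] := f_hom.
split; first exact: cyclic_monotone_comp.
split=> [v w /h_edge /= [->|/f_edge[->|]]|h_cycle]; [by left|by left|by right|].
case: (posnP k) => [k0|k_gt0]; first by move: h_cycle; rewrite k0 => /Cnk0_acyclic.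
exact: cyclic_hom_comp_nonconst adjG_cyc adjH_di k_gt0 km h_hom f_hom.
Qed.

Local Open Scope ring_scope.

Section CircleWinding.
Variable R : realType.
Implicit Types (x y z rho : R) (q : nat -> R).

Lemma cwdist_wrap x y : cwdist x y = y - x + ((y < x)%R : nat)%:R.
Proof. by rewrite /cwdist subr_ge0; case: leP; rewrite ?addr0. Qed.

Lemma cwdist_ge0 x y : 0 <= x < 1 -> 0 <= y < 1 -> 0 <= cwdist x y.
Proof. by move=> /andP[? ?] /andP[? ?]; rewrite /cwdist; case: ifP => /=; lra. Qed.

Lemma cwdistxx x : cwdist x x = 0.
Proof. by rewrite /cwdist subrr lexx. Qed.

Lemma cwdist_add x y z : 0 <= x < 1 -> 0 <= y < 1 -> 0 <= z < 1 ->
  cwdist x y + cwdist y z < 1 -> cwdist x y + cwdist y z = cwdist x z.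
Proof.
move=> /andP[? ?] /andP[? ?] /andP[? ?]; rewrite /cwdist.
by do 3!case: ifP; rewrite /= ?subr_ge0 => ? ? ?; lra.
Qed.

Lemma sumr_shift_period m (F : nat -> R) l : (forall i, F (i + m)%N = F i) ->
  \sum_(i < m) F (i + l)%N = \sum_(i < m) F i.
Proof.
move=> F_per; elim: l => [|l IH]; first by under eq_bigr do rewrite addn0.
pose G i := F (i + l)%N.
have G_shift : \sum_(i < m) G i.+1 = \sum_(i < m) G i + G m - G 0%N.
  have G_recl : \sum_(i < m.+1) G i = G 0%N + \sum_(i < m) G i.+1 := big_ord_recl _ _.
  have G_recr : \sum_(i < m.+1) G i = \sum_(i < m) G i + G m := big_ord_recr _ _.
  lra.
rewrite -IH -/(\sum_(i < m) G i); under eq_bigr do rewrite addnS -addSn.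
by rewrite G_shift /G addnC F_per add0n; lra.
Qed.

Lemma sum_windows_period m k (F : nat -> R) : (forall i, F (i + m)%N = F i) ->
  \sum_(i < m) \sum_(l < k) F (i + l)%N = k%:R * \sum_(i < m) F i.
Proof.
move=> F_per; rewrite exchange_big /=.
under eq_bigr do rewrite (sumr_shift_period _ F_per).
by rewrite sumr_const card_ord mulr_natl.
Qed.

Lemma cwdist_sum_period_nat m q : q m = q 0%N ->
  exists N : nat, \sum_(i < m) cwdist (q i) (q i.+1) = N%:R.
Proof.
move=> q_per; exists (\sum_(i < m) ((q i.+1 < q i)%R : nat))%N.
under eq_bigr do rewrite cwdist_wrap.
rewrite big_split /= natr_sum.
rewrite -(big_mkord xpredT (fun i => q i.+1 - q i)) telescope_sumr // q_per.
by rewrite subrr add0r.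
Qed.

Lemma cwdist_sum_window q k rho : (forall i, 0 <= q i < 1) -> 0 <= rho -> rho + rho < 1 ->
  (forall i j, (0 < j <= k)%N -> cwdist (q i) (q (i + j)%N) <= rho) ->
  forall i j, (j <= k)%N ->
  \sum_(l < j) cwdist (q (i + l)%N) (q (i + l).+1) = cwdist (q i) (q (i + j)%N).
Proof.
move=> q01 rho_ge0 rho_half window i; elim=> [|j IH] j_le.
  by rewrite big_ord0 addn0 cwdistxx.
rewrite big_ord_recr /= IH; last lia.
rewrite -addnS; apply: cwdist_add => //.
have head_le : cwdist (q i) (q (i + j)%N) <= rho.
  by case: (posnP j) => [->|j_gt0]; [rewrite addn0 cwdistxx|apply: window; lia].
have step_le : cwdist (q (i + j)%N) (q (i + j.+1)%N) <= rho.
  by rewrite addnS -[(i + j).+1]addn1; apply: window; lia.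
lra.
Qed.

End CircleWinding.

Lemma cyclic_hom_Cnk_ratio_le (R : realType) n (adj : rel 'I_n) (p : 'I_n -> R) rho :
  (forall v, 0 <= p v < 1) -> 0 <= rho -> rho + rho < 1 ->
  (forall v w, adj v w -> 0 < cwdist (p v) (p w) <= rho) ->
  forall m k (f : 'I_m -> 'I_n), (k.*2 < m)%N -> cyclic_hom (Cnk m k) adj f ->
  k%:R / m%:R <= rho.
Proof.
move=> p01 rho_ge0 rho_half p_edge m k f km f_hom; have [_ [f_edge _]] := f_hom.
have m_gt0 : (0 < m)%N by lia.
have m_pos : 0 < m%:R :> R by rewrite ltr0n.
case: (posnP k) => [-> | k_gt0]; first by rewrite mul0r.
pose q i := p (f (ord_mod m_gt0 i)).
pose d i := cwdist (q i) (q i.+1).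
have q01 i : 0 <= q i < 1 by apply: p01.
have q_per i : q (i + m)%N = q i by rewrite /q ord_modDr.
have d_per i : d (i + m)%N = d i by rewrite /d -addSn !q_per.
have window i j : (0 < j <= k)%N -> cwdist (q i) (q (i + j)%N) <= rho.
  move=> j_range; have /f_edge[e|e] := Cnk_ord_mod m_gt0 i j_range ltac:(lia).
    by rewrite /q e cwdistxx.
  by case/andP: (p_edge _ _ e).
(* [N] is the number of times the image of the standard cycle winds around the circle. *)
have [N sumN] : exists N : nat, \sum_(i < m) d i = N%:R.
  by apply: cwdist_sum_period_nat; have := q_per 0%N; rewrite add0n.
have sum_gt0 : 0 < \sum_(i < m) d i.
  have [i i_lt] := Cnk_hom_nonconst_step m_gt0 k_gt0 km f_hom.
  case: (Cnk_hom_step m_gt0 k_gt0 km f_hom i) => [-> /eqP[] //|e _].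
  rewrite (bigD1 (Ordinal i_lt)) //= ltr_wpDr ?sumr_ge0 //; last by case/andP: (p_edge _ _ e).
  by move=> j _; apply: cwdist_ge0.
have windows_le : \sum_(i < m) \sum_(l < k) d (i + l)%N <= m%:R * rho.
  under eq_bigr do rewrite (cwdist_sum_window q01 rho_ge0 rho_half window) //.
  have -> : m%:R * rho = \sum_(i < m) rho by rewrite sumr_const card_ord mulr_natl.
  by apply: ler_sum => i _; apply: window; lia.
rewrite (sum_windows_period _ d_per) sumN in windows_le.
have N_ge1 : 1 <= N%:R :> R by rewrite ler1n -(ltr0n R) -sumN.
have k_ge0 : 0 <= k%:R :> R by [].
rewrite ler_pdivrMr //; nra.
Qed.

Local Open Scope classical_set_scope.

Definition wfset (R : realType) n (adj : rel 'I_n) : set R :=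
  [set x : R | exists (m k : nat) (f : 'I_m -> 'I_n),
     (k.*2 < m)%N /\ cyclic_hom (Cnk m k) adj f /\ x = k%:R / m%:R].
Arguments wfset R {n} adj.

Lemma wfE (R : realType) n (adj : rel 'I_n) : wf R adj = sup (wfset R adj).
Proof. by []. Qed.

Lemma sup_le_nonneg (R : realType) (A : set R) rho : 0 <= rho -> ubound A rho -> sup A <= rho.
Proof.
move=> rho_ge0 A_ub; have [A_ne|A0] := pselect (A !=set0); first exact: ge_sup.
suff -> : A = set0 by rewrite sup0.
by apply/seteqP; split=> x // Ax; apply: A0; exists x.
Qed.

Section WindingFractionSup.
Variables (R : realType) (n : nat) (adj : rel 'I_n).

Lemma wfset_in01 x : wfset R adj x -> 0 <= x <= 1.
Proof.
move=> [m [k [f [km [_ ->]]]]]; have m_pos : 0 < m%:R :> R by rewrite ltr0n; lia.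
by rewrite divr_ge0 //= ler_pdivrMr // mul1r ler_nat; lia.
Qed.

Lemma wfset_le_wf x : wfset R adj x -> x <= wf R adj.
Proof.
by move=> wx; apply: ub_le_sup wx; exists 1 => y /wfset_in01 /andP[].
Qed.

Lemma ge_wf rho : 0 <= rho -> ubound (wfset R adj) rho -> wf R adj <= rho.
Proof. exact: sup_le_nonneg. Qed.

Lemma wf_ge0 : 0 <= wf R adj.
Proof.
have [[x wx]|wf0] := pselect (wfset R adj !=set0).
  by apply: le_trans (wfset_le_wf wx); case/andP: (wfset_in01 wx).
rewrite wfE (_ : wfset R adj = set0) ?sup0 //.
by apply/seteqP; split=> x // wx; apply: wf0; exists x.
Qed.

End WindingFractionSup.

Lemma le_wf_subset (R : realType) m n (adjG : rel 'I_m) (adjH : rel 'I_n) :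
  wfset R adjG `<=` wfset R adjH -> wf R adjG <= wf R adjH.
Proof.
by move=> sub; apply: ge_wf; [exact: wf_ge0|move=> x /sub /wfset_le_wf].
Qed.

Lemma cyclic_hom_subrel m n (adjG : rel 'I_m) (adj adj' : rel 'I_n) (f : 'I_m -> 'I_n) :
  subrel adj adj' -> cyclic_hom adjG adj f -> cyclic_hom adjG adj' f.
Proof.
move=> adj_sub [f_mono [f_edge f_nonconst]]; do 2!split=> //.
by move=> v w /f_edge[->|/adj_sub]; [left|right].
Qed.

Lemma le_wf_subrel (R : realType) n (adj adj' : rel 'I_n) :
  subrel adj adj' -> wf R adj <= wf R adj'.
Proof.
move=> adj_sub; apply: le_wf_subset => x [m [k [f [km [f_hom ->]]]]].
by exists m, k, f; split=> //; split=> //; apply: cyclic_hom_subrel f_hom.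
Qed.

Lemma wf_le_placement (R : realType) n (adj : rel 'I_n) (p : 'I_n -> R) rho :
  (forall v, 0 <= p v < 1) -> 0 <= rho -> rho + rho < 1 ->
  (forall v w, adj v w -> 0 < cwdist (p v) (p w) <= rho) -> wf R adj <= rho.
Proof.
move=> p01 rho_ge0 rho_half p_edge; apply: ge_wf => // x [m [k [f [km [f_hom ->]]]]].
exact: (cyclic_hom_Cnk_ratio_le p01 rho_ge0 rho_half p_edge km f_hom).
Qed.

Lemma cpt_in01 (R : realType) (X : seq R) (v : 'I_(size X)) : on_circle X -> 0 <= cpt X v < 1.
Proof.
move=> [_ /allP X01]; apply: X01.
by rewrite /cpt -(mem_sort <=%R) mem_nth // size_sort.
Qed.

Lemma exists_gap_below (R : realType) (T : finType) (F : T -> R) r : 0 < r ->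
  exists rho, [/\ r / 2 <= rho, rho < r & forall t, F t < r -> F t <= rho].
Proof.
move=> r_gt0.
suff [rho [rho_ge rho_lt rho_ub]] : exists rho, [/\ r / 2 <= rho, rho < r &
    forall t, t \in enum T -> F t < r -> F t <= rho].
  by exists rho; split => // t; apply: rho_ub; rewrite mem_enum.
elim: (enum T) => [|t s [rho [rho_ge rho_lt rho_ub]]]; first by exists (r / 2); split => //; lra.
have [Ft_lt|Ft_ge] := ltP (F t) r; last first.
  by exists rho; split => // u; rewrite inE => /orP[/eqP ->|/rho_ub //]; lra.
exists (Num.max rho (F t)); split; rewrite ?le_max ?gt_max ?rho_ge ?rho_lt ?Ft_lt //.
by move=> u; rewrite inE le_max => /orP[/eqP -> _|/rho_ub u_le /u_le ->]; rewrite ?lexx ?orbT.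
Qed.

Lemma wf_VR_bounds (R : realType) (X : seq R) r : on_circle X -> 0 < r -> r < 1 / 2 ->
  [/\ wf_le X r <= r, wf_lt X r < r & wf_lt X r <= wf_le X r].
Proof.
move=> X_circ r_gt0 r_half; have cpt01 := cpt_in01 (X:=X) ^~ X_circ; split.
- apply: (wf_le_placement cpt01); [exact: ltW|lra|by move=> v w /andP[-> ->]].
- pose F (vw : 'I_(size X) * 'I_(size X)) := cwdist (cpt X vw.1) (cpt X vw.2).
  have [rho [rho_ge rho_lt rho_ub]] := exists_gap_below F r_gt0.
  apply: (le_lt_trans _ rho_lt); apply: (wf_le_placement cpt01); [lra|lra|].
  by move=> v w /andP[-> /(rho_ub (v, w))].
- by apply: le_wf_subrel => v w /andP[d_gt0 d_lt]; rewrite /VR_le d_gt0 ltW.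
Qed.

Lemma cwdist_frac (R : realType) n (v w : 'I_n) :
  cwdist (v%:R / n%:R : R) (w%:R / n%:R) = (cdist v w)%:R / n%:R.
Proof.
have n_pos : 0 < n%:R :> R by rewrite ltr0n; have := ltn_ord v; lia.
have [[v_le ->]|[w_lt ->]] : (v <= w /\ cdist v w = w - v)%N \/ (w < v /\ cdist v w = w + n - v)%N.
  by rewrite /cdist; ord_lia.
- by rewrite /cwdist -mulrBl ifT ?natrB // divr_ge0 // subr_ge0 ler_nat.
- rewrite /cwdist -mulrBl ifF; last first.
    by apply/negbTE; rewrite -ltNge pmulr_llt0 ?invr_gt0 // subr_lt0 ltr_nat.
  rewrite natrB; last by have := ltn_ord v; lia.
  by rewrite natrD; field; rewrite gt_eqF.
Qed.

Lemma Cnk_digraph n k : (k.*2 < n)%N -> is_digraph (Cnk n k).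
Proof.
move=> kn; split=> [v|v w].
  by rewrite CnkE (_ : cdist v v = 0%N) //; apply/eqP; rewrite cdist_eq0.
rewrite !CnkE => /andP[vw_gt0 vw_le]; apply/negP => /andP[_ wv_le].
have := @cdist_sym _ v w; rewrite -cdist_eq0 -lt0n vw_gt0 => /(_ isT).
lia.
Qed.

Lemma cyclic_monotone_id n : cyclic_monotone (@id 'I_n).
Proof.
split=> // y; right; left; exists y, y; split=> // x.
by rewrite inE -(inj_eq val_inj) eqn_leq andbC.
Qed.

Lemma cyclic_hom_id n (adj : rel 'I_n) : is_digraph adj -> cyclic_hom adj adj id.
Proof.
move=> [adj_irr _]; split; first exact: cyclic_monotone_id.
split=> [v w vw|[[|x s] [// _ s_cycle]]]; first by right.
exists x, (next (x :: s) x) => x_next.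
by have := next_cycle s_cycle (mem_head x s); rewrite -x_next (negbTE (adj_irr x)).
Qed.

Lemma wf_Cnk (R : realType) n k : (k.*2 < n)%N -> wf R (Cnk n k) = k%:R / n%:R.
Proof.
move=> kn; have n_pos : 0 < n%:R :> R by rewrite ltr0n; lia.
apply/le_anti/andP; split; last first.
  apply: wfset_le_wf; exists n, k, id; split=> //; split=> //.
  exact/cyclic_hom_id/Cnk_digraph.
apply: (wf_le_placement (p := fun v => v%:R / n%:R)) => [v|||v w].
- by rewrite divr_ge0 //= ltr_pdivrMr // mul1r ltr_nat.
- exact: divr_ge0.
- by rewrite -mulrDl ltr_pdivrMr // mul1r -natrD ltr_nat; lia.
rewrite CnkE cwdist_frac => /andP[vw_gt0 vw_le].
rewrite divr_gt0 ?ltr0n //=; last lia.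
by apply: ler_wpM2r; rewrite ?invr_ge0 ?ler0n ?ler_nat.
Qed.

Lemma wf_gt0_cycle (R : realType) n (adj : rel 'I_n) : is_cyclic_graph adj ->
  (0 < wf R adj <-> has_directed_cycle adj).
Proof.
move=> adj_cyc; split=> [wf_gt0|adj_cycle].
  apply: contrapT => no_cycle; move: wf_gt0; apply/negP; rewrite -leNgt.
  apply: ge_wf => // x [m [k [f [km [f_hom ->]]]]].
  case: (posnP k) => [->|k_gt0]; first by rewrite mul0r.
  by case: no_cycle; apply: (cyclic_hom_Cnk_cycle _ k_gt0 km f_hom); lia.
have [t [f [t_gt2 f_hom]]] := cyclic_graph_Cn1_hom adj_cyc adj_cycle.
apply: (lt_le_trans _ (wfset_le_wf _)); last by exists t, 1%N, f; split=> //; lia.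
by rewrite divr_gt0 ?ltr0n //; lia.
Qed.

Lemma wf_cyclic_hom_le (R : realType) m n (adjG : rel 'I_m) (adjH : rel 'I_n) (f : 'I_m -> 'I_n) :
  is_cyclic_graph adjG -> is_digraph adjH -> cyclic_hom adjG adjH f -> wf R adjG <= wf R adjH.
Proof.
move=> adjG_cyc adjH_di f_hom; apply: le_wf_subset => x [m' [k [h [km [h_hom ->]]]]].
by exists m', k, (f \o h); split=> //; split=> //; apply: cyclic_hom_Cnk_comp h_hom f_hom.
Qed.

Theorem proposition3p8 (R : realType) :
  (* (a) *)
  (forall (n : nat) (adj : rel 'I_n), is_cyclic_graph adj ->
     (0 < wf R adj <-> has_directed_cycle adj)) /\
  (* (b) *)
  (forall (m n : nat) (adjG : rel 'I_m) (adjH : rel 'I_n) (f : 'I_m -> 'I_n),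
     is_cyclic_graph adjG -> is_cyclic_graph adjH -> cyclic_hom adjG adjH f ->
     wf R adjG <= wf R adjH) /\
  (* (c) *)
  (forall (X : seq R) (r : R), on_circle X -> 0 < r -> r < 1 / 2 ->
     [/\ wf_le X r <= r, wf_lt X r < r & wf_lt X r <= wf_le X r]) /\
  (* (d) *)
  (forall n k : nat, (k.*2 < n)%N -> wf R (Cnk n k) = k%:R / n%:R).
Proof.
split; first by move=> n adj; apply: wf_gt0_cycle.
split; first by move=> m n adjG adjH f adjG_cyc [adjH_di _]; apply: wf_cyclic_hom_le.
split; first by move=> X r; apply: wf_VR_bounds.
by move=> n k; apply: wf_Cnk.
Qed.
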